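(* Let an operational theory contain two binary-outcome measurements, a which-way measurement $Z$ and a which-phase measurement $X$, each with outcomes in $\{+1,-1\}$, and suppose the theory has $A_1^2$-symmetry relative to $Z$ and $X$. For a state $\vec{s}$, define the path distinguishability $\mathcal{P}(\vec{s}) = |\langle Z\rangle_{\vec{s}}| = |\mathbb{P}(+1|Z,\vec{s})-\mathbb{P}(-1|Z,\vec{s})|$ and the fringe visibility $\mathcal{V}(\vec{s}) = |\langle X\rangle_{\vec{s}}| = |\mathbb{P}(+1|X,\vec{s})-\mathbb{P}(-1|X,\vec{s})|$. If the operational theory admits a (generalized-)noncontextual ontological model, then every state $\vec{s}$ of the theory satisfies $$\mathcal{V}(\vec{s}) + \mathcal{P}(\vec{s}) \le 1.$$
   Context: An operational theory (for a single system, prepare-measure scenario) specifies a set of preparations $P$, measurements $M$, and probabilities $\mathbb{P}(y|M,P)$ of outcome $y$ of $M$ given $P$. In the generalized-probabilistic-theory representation each preparation is represented by a real vector $\vec{s}_P$ (its ''operational state'') and each effect $[y|M]$ by a real vector $\vec{e}_{y|M}$ with $\mathbb{P}(y|M,P)=\vec{s}_P\cdot\vec{e}_{y|M}$; two preparations are operationally equivalent iff they give identical statistics for all measurements, i.e. iff they have the same vector. The set of operational states is assumed closed under convex mixtures. For a measurement $M$ with outcomes in $\{+1,-1\}$, $\langle M\rangle_{\vec{s}} = \mathbb{P}(+1|M,\vec{s})-\mathbb{P}(-1|M,\vec{s})$, and $|\langle M\rangle_{\vec{s}}|$ is called the $M$-predictability. An ontological model assigns a (finite) set $\Lambda$, to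 each preparation $P$ a probability distribution $\mu(\lambda|P)$ on $\Lambda$, and to each measurement $M$ a conditional distribution $\xi(y|M,\lambda)$, such that $\mathbb{P}(y|M,P)=\sum_{\lambda}\xi(y|M,\lambda)\mu(\lambda|P)$. It is (generalized, preparation-)noncontextual if operationally equivalent preparations are assigned the same distribution; in particular, if $\sum_i w_i\vec{s}_i=\sum_j w'_j\vec{s}'_j$ for probability weights $w,w'$, then $\sum_i w_i\mu(\cdot|P_i)=\sum_j w'_j\mu(\cdot|P'_j)$. A state $\vec{s}_1$ satisfies the $A_1^2$-orbit-realizability condition relative to measurements $M,M'$ (outcomes $\pm1$) if there exist operational states $\vec{s}_2,\vec{s}_3,\vec{s}_4$ in the theory such that $\langle M\rangle_{\vec{s}_1}=\langle M\rangle_{\vec{s}_2}=-\langle M\rangle_{\vec{s}_3}=-\langle M\rangle_{\vec{s}_4}$, $\langle M'\rangle_{\vec{s}_1}=-\langle M'\rangle_{\vec{s}_2}=-\langle M'\rangle_{\vec{s}_3}=\langle M'\rangle_{\vec{s}_4}$, and $\tfrac12\vec{s}_1+\tfrac12\vec{s}_3=\tfrac12\vec{s}_2+\tfrac12\vec{s}_4$. The theory has $A_1^2$-symmetry relative to $M,M'$ if every operational state satisfies this condition. *)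

(* Operational theories in the GPT representation, over an
   arbitrary real field R, with operational states/effects in 'rV[R]_n. *)
From HB Require Import structures.
From mathcomp Require Import all_boot all_order all_algebra.
Set Implicit Arguments. Unset Strict Implicit. Unset Printing Implicit Defensive.
Import Order.TTheory GRing.Theory Num.Theory.
Local Open Scope ring_scope.

Definition dotv (R : realFieldType) (n : nat) (s e : 'rV[R]_n) : R :=
  \sum_(i < n) s ord0 i * e ord0 i.

Definition probw (R : realFieldType) (k : nat) (w : 'I_k -> R) : Prop :=
  (forall i, 0 <= w i) /\ \sum_(i < k) w i = 1.

(* P(y|M,P) = st P . eff M y. *)
Unset Implicit Arguments.
Record optheory (R : realFieldType) (n : nat) := OpTheory {
  Prep : Type;
  st : Prep -> 'rV[R]_n;
  Meas : Type;
  Out : Meas -> finType;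
  eff : forall M : Meas, Out M -> 'rV[R]_n;
  prob_ge0 : forall (P : Prep) (M : Meas) (y : Out M), 0 <= dotv (st P) (eff M y);
  prob_sum1 : forall (P : Prep) (M : Meas), \sum_(y : Out M) dotv (st P) (eff M y) = 1;
  mix_closed : forall (k : nat) (w : 'I_k -> R) (Ps : 'I_k -> Prep),
      probw w -> exists P, st P = \sum_(i < k) w i *: st (Ps i)
}.

Set Implicit Arguments.
Arguments Prep {R n}.
Arguments Meas {R n}.
Arguments Out {R n o} _.
Arguments st {R n} o _.
Arguments eff {R n o} M _.

Definition prob R n (T : optheory R n) (M : Meas T) (y : Out M) (P : Prep T) : R :=
  dotv (st T P) (eff M y).

Definition binary_meas R n (T : optheory R n) (M : Meas T) (yp ym : Out M) : Prop :=
  yp != ym /\ forall y : Out M, y = yp \/ y = ym.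

(* <M>_s for a binary measurement with outcomes yp (+1), ym (-1), on a state s *)
Definition expect R n (T : optheory R n) (M : Meas T) (yp ym : Out M)
  (s : 'rV[R]_n) : R := dotv s (eff M yp) - dotv s (eff M ym).

Definition A12_orbit R n (T : optheory R n) (M : Meas T) (mp mm : Out M)
  (M' : Meas T) (mp' mm' : Out M') (P1 : Prep T) : Prop :=
  exists P2 P3 P4 : Prep T,
    let s1 := st T P1 in let s2 := st T P2 in
    let s3 := st T P3 in let s4 := st T P4 in
    (expect mp mm s1 = expect mp mm s2 /\
     expect mp mm s2 = - expect mp mm s3 /\
     - expect mp mm s3 = - expect mp mm s4) /\
    (expect mp' mm' s1 = - expect mp' mm' s2 /\
     - expect mp' mm' s2 = - expect mp' mm' s3 /\
     - expect mp' mm' s3 = expect mp' mm' s4) /\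
    2^-1 *: s1 + 2^-1 *: s3 = 2^-1 *: s2 + 2^-1 *: s4.

Definition A12_symmetric R n (T : optheory R n) (M : Meas T) (mp mm : Out M)
  (M' : Meas T) (mp' mm' : Out M') : Prop :=
  forall P1 : Prep T, A12_orbit mp mm mp' mm' P1.

Definition ontological_model R n (T : optheory R n) (L : finType)
  (mu : Prep T -> L -> R) (xi : forall M : Meas T, Out M -> L -> R) : Prop :=
  [/\ forall (P : Prep T) (l : L), 0 <= mu P l,
      forall P, \sum_(l : L) mu P l = 1,
      forall (M : Meas T) (y : Out M) (l : L), 0 <= xi M y l,
      forall (M : Meas T) (l : L), \sum_(y : Out M) xi M y l = 1 &
      forall (M : Meas T) (y : Out M) (P : Prep T), prob y P = \sum_(l : L) xi M y l * mu P l].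

Definition prep_noncontextual R n (T : optheory R n) (L : finType)
  (mu : Prep T -> L -> R) : Prop :=
  forall (k m : nat) (w : 'I_k -> R) (Ps : 'I_k -> Prep T)
         (w' : 'I_m -> R) (Ps' : 'I_m -> Prep T),
    probw w -> probw w' ->
    \sum_(i < k) w i *: st T (Ps i) = \sum_(j < m) w' j *: st T (Ps' j) ->
    forall l, \sum_(i < k) w i * mu (Ps i) l = \sum_(j < m) w' j * mu (Ps' j) l.

Definition admits_NC_model R n (T : optheory R n) : Prop :=
  exists (L : finType) (mu : Prep T -> L -> R)
         (xi : forall M : Meas T, Out M -> L -> R),
    ontological_model mu xi /\ prep_noncontextual mu.

(* In a noncontextual model the equal mixtures (s1 + s3)/2 = (s2 + s4)/2 of
   the A_1^2 orbit force mu1 + mu3 = mu2 + mu4 on ontic states.  Writing the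
   differences of expectations as integrals of the response functions
   p = xi(+1|Z) and q = xi(+1|X), e.g.
   (<Z>_1 - <Z>_4)/2 + (<X>_1 - <X>_2)/2 = sum p (mu1 - mu4) + q (mu1 - mu2),
   this quantity is at most sum mu1 = 1, because pointwise
   mu1 - p (mu1 - mu4) - q (mu1 - mu2)
     = (1-p)(1-q) mu1 + p (1-q) mu4 + (1-p) q mu2 + p q mu3 >= 0.
   Each of the four orbit states bounds one of the sign combinations +-V +-P. *)
From mathcomp Require Import all_boot all_order all_algebra.
From mathcomp Require Import ring lra.

Set Implicit Arguments.
Unset Strict Implicit.
Unset Printing Implicit Defensive.
Import Order.TTheory GRing.Theory Num.Theory.
Local Open Scope ring_scope.

Lemma big_binary {R : nmodType} {Y : finType} {yp ym : Y} (F : Y -> R) :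
  yp != ym -> (forall y : Y, y = yp \/ y = ym) -> \sum_y F y = F yp + F ym.
Proof.
move=> neq_pm Y_pm; rewrite (bigD1 yp) //=; congr (_ + _).
rewrite (eq_bigl (pred1 ym)) ?big_pred1_eq // => y /=.
by case: (Y_pm y) => ->; rewrite ?eqxx ?(negbTE neq_pm) // eq_sym neq_pm.
Qed.

Lemma response_mixture_bound (R : realFieldType) (L : finType)
    (mu1 mu2 mu3 mu4 p q : L -> R) :
  (forall l, 0 <= mu1 l) -> (forall l, 0 <= mu2 l) ->
  (forall l, 0 <= mu3 l) -> (forall l, 0 <= mu4 l) ->
  (forall l, 0 <= p l <= 1) -> (forall l, 0 <= q l <= 1) ->
  (forall l, mu1 l + mu3 l = mu2 l + mu4 l) -> \sum_l mu1 l = 1 ->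
  \sum_l p l * (mu1 l - mu4 l) + \sum_l q l * (mu1 l - mu2 l) <= 1.
Proof.
move=> ge0_1 ge0_2 ge0_3 ge0_4 p01 q01 mix sum1.
rewrite -big_split /= -sum1; apply: ler_sum => l _.
have /andP[p0 p1] := p01 l; have /andP[q0 q1] := q01 l.
have decomp : mu1 l - (p l * (mu1 l - mu4 l) + q l * (mu1 l - mu2 l)) =
    (1 - p l) * (1 - q l) * mu1 l + p l * (1 - q l) * mu4 l
    + (1 - p l) * q l * mu2 l + p l * q l * mu3 l.
  have -> : mu3 l = mu2 l + mu4 l - mu1 l by rewrite -mix; ring.
  by ring.
rewrite -subr_ge0 decomp.
by rewrite !addr_ge0 // !mulr_ge0 // subr_ge0.
Qed.

Lemma normD_le1 (R : realDomainType) (a b : R) :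
  a + b <= 1 -> a - b <= 1 -> - a + b <= 1 -> - a - b <= 1 ->
  `|a| + `|b| <= 1.
Proof.
by have [a0|a0] := lerP 0 a; have [b0|b0] := lerP 0 b;
  rewrite ?(ger0_norm a0) ?(ltr0_norm a0) ?(ger0_norm b0) ?(ltr0_norm b0).
Qed.

Section NoncontextualModel.

Variables (R : realFieldType) (n : nat) (T : optheory R n) (L : finType).
Variables (mu : Prep T -> L -> R) (xi : forall M : Meas T, Out M -> L -> R).
Arguments xi : clear implicits.
Hypothesis model : ontological_model mu xi.

Lemma response_le1 (M : Meas T) (y : Out M) (l : L) : xi M y l <= 1.
Proof.
case: model => _ _ xi_ge0 xi_sum1 _.
rewrite -(xi_sum1 M l) (bigD1 y) //= lerDl.
by apply: sumr_ge0 => y' _; apply: xi_ge0.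
Qed.

Lemma expect_model (M : Meas T) (yp ym : Out M) (P : Prep T) :
  binary_meas yp ym ->
  expect yp ym (st T P) = 2 * \sum_l xi M yp l * mu P l - 1.
Proof.
case: model => _ mu_sum1 _ xi_sum1 prob_model [neq_pm Y_pm].
have xi_ym l : xi M ym l = 1 - xi M yp l.
  rewrite -(xi_sum1 M l) (big_binary (xi M ^~ l) neq_pm Y_pm).
  by rewrite [_ + xi M ym l]addrC addrK.
rewrite /expect -[dotv _ (eff M yp)]/(prob yp P) -[dotv _ (eff M ym)]/(prob ym P).
rewrite !prob_model.
under [X in _ - X]eq_bigr => l _ do rewrite xi_ym mulrBl mul1r.
by rewrite sumrB mu_sum1; ring.
Qed.

Lemma expectB_model (M : Meas T) (yp ym : Out M) (P1 P2 : Prep T) :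
  binary_meas yp ym ->
  expect yp ym (st T P1) - expect yp ym (st T P2) =
  2 * \sum_l xi M yp l * (mu P1 l - mu P2 l).
Proof.
move=> bin; rewrite !expect_model //.
under [in RHS]eq_bigr => l _ do rewrite mulrBr.
by rewrite sumrB; ring.
Qed.

Hypothesis noncontextual : prep_noncontextual mu.

Lemma noncontextual_equal_mixture (P1 P2 P3 P4 : Prep T) :
  2^-1 *: st T P1 + 2^-1 *: st T P3 = 2^-1 *: st T P2 + 2^-1 *: st T P4 ->
  forall l, mu P1 l + mu P3 l = mu P2 l + mu P4 l.
Proof.
move=> mix l.
have half : probw (fun _ : 'I_2 => (2 : R)^-1).
  by split=> [i|]; [rewrite invr_ge0 | rewrite !big_ord_recr big_ord0 /=; lra].
pose pair (Pa Pb : Prep T) (i : 'I_2) := if val i == 0%N then Pa else Pb.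
have sum_pair Pa Pb (F : Prep T -> 'rV[R]_n) :
    \sum_(i < 2) 2^-1 *: F (pair Pa Pb i) = 2^-1 *: F Pa + 2^-1 *: F Pb.
  by rewrite !big_ord_recr big_ord0 /= add0r.
have := noncontextual (Ps := pair P1 P3) (Ps' := pair P2 P4) half half.
rewrite !sum_pair => /(_ mix l).
rewrite !big_ord_recr !big_ord0 /= !add0r.
lra.
Qed.

Lemma expect_orbit_bound (Z : Meas T) (zp zm : Out Z) (X : Meas T) (xp xm : Out X)
    (P1 P2 P3 P4 : Prep T) :
  binary_meas zp zm -> binary_meas xp xm ->
  (forall l, mu P1 l + mu P3 l = mu P2 l + mu P4 l) ->
  (expect zp zm (st T P1) - expect zp zm (st T P4)) / 2
  + (expect xp xm (st T P1) - expect xp xm (st T P2)) / 2 <= 1.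
Proof.
move=> binZ binX mix.
case: (model) => mu_ge0 mu_sum1 xi_ge0 _ _.
rewrite !expectB_model // ![2 * _ / 2]mulrC !mulKf ?pnatr_eq0 //.
apply: response_mixture_bound => // l; apply/andP; split;
  by [apply: xi_ge0 | apply: response_le1].
Qed.

End NoncontextualModel.

Theorem corollary1 (R : realFieldType) (n : nat) (T : optheory R n)
  (Z : Meas T) (zp zm : Out Z) (X : Meas T) (xp xm : Out X) :
  binary_meas zp zm -> binary_meas xp xm ->
  A12_symmetric zp zm xp xm ->
  admits_NC_model T ->
  forall P : Prep T,
    `|expect xp xm (st T P)| + `|expect zp zm (st T P)| <= 1.
Proof.
move=> binZ binX orbits [L [mu [xi [model nc]]]] P.
have [P2 [P3 [P4 [[z12 [z23 z34]] [[x12 [x23 x34]] mix]]]]] := orbits P.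
have mix13 := noncontextual_equal_mixture nc mix.
have bound := expect_orbit_bound model binZ binX.
have b1 := bound P P2 P3 P4 mix13.
have b2 := bound P2 P P4 P3 (fun l => esym (mix13 l)).
have b3 := bound P4 P3 P2 P
  (fun l => etrans (addrC _ _) (etrans (esym (mix13 l)) (addrC _ _))).
have b4 := bound P3 P4 P P2
  (fun l => etrans (addrC _ _) (etrans (mix13 l) (addrC _ _))).
apply: normD_le1; lra.
Qed.
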